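(* Let $p\ge1$, $f:\mathbb{R}^n\to\mathbb{R}$ be $p$ times continuously differentiable, $x_k\in\mathbb{R}^n$, $\sigma_k>0$, $\theta_1\ge1$, and $m_k(s)=T_{f,p}(x_k,s)+\frac{\sigma_k}{(p+1)!}\|s\|^{p+1}$. Then there exists $s_k\in\mathbb{R}^n$ such that $$m_k(s_k)\le m_k(0)\qquad\text{and}\qquad \|\nabla_s T_{f,p}(x_k,s_k)\|_{r,1}\le\theta_1\frac{\sigma_k}{p!}\|s_k\|^p.$$
   Context: $\|\cdot\|$ is an arbitrary (possibly non-smooth) norm on $\mathbb{R}^n$, $\langle\cdot,\cdot\rangle$ the Euclidean inner product, and $\|v\|_{r,1}=\max_{\|s\|=1}|\langle v,s\rangle|$ the dual norm. $T_{f,p}(x,s)=f(x)+\sum_{\ell=1}^p\frac{1}{\ell!}\nabla^\ell f(x)[s]^\ell$ is the $p$-th order Taylor expansion of $f$ at $x$; $\nabla_sT_{f,p}(x,s)$ is its gradient in $s$. *)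

From HB Require Import structures.
From mathcomp Require Import all_boot all_order all_algebra.
From mathcomp Require Import all_classical all_reals all_analysis.
Set Implicit Arguments. Unset Strict Implicit. Unset Printing Implicit Defensive.
Import Order.TTheory GRing.Theory Num.Theory.
Import numFieldNormedType.Exports.
Local Open Scope classical_set_scope.
Local Open Scope ring_scope.

Section Defs.
Variables (R : realType) (n : nat).
Notation V := 'rV[R]_n.

Definition ebasis (i : 'I_n) : V := delta_mx 0 i.

Definition inner (u v : V) : R := \sum_(i < n) u 0 i * v 0 i.

Definition is_norm (nrm : V -> R) : Prop :=
  [/\ forall x, nrm x = 0 -> x = 0,
      forall (a : R) x, nrm (a *: x) = `|a| * nrm x &
      forall x y, nrm (x + y) <= nrm x + nrm y].

(* dual norm  ||v||_{r,1} = max_{||s|| = 1} |<v,s>| *)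
Definition dualnorm (nrm : V -> R) (v : V) : R :=
  sup [set `|inner v s| | s in [set s | nrm s = 1]].

Fixpoint Ck (k : nat) (f : V -> R) : Prop :=
  match k with
  | O => continuous f
  | k'.+1 => (forall x, differentiable f x) /\
             (forall i : 'I_n, Ck k' (fun x => 'D_(ebasis i) f x))
  end.

(* iterated directional derivative: dirn l s f x = nabla^l f(x)[s]^l *)
Definition dirn (l : nat) (s : V) (f : V -> R) : V -> R :=
  iter l (fun g y => 'D_s g y) f.

Definition taylor (f : V -> R) (p : nat) (x s : V) : R :=
  f x + \sum_(1 <= l < p.+1) (l`!%:R)^-1 * dirn l s f x.

Definition gradT (f : V -> R) (p : nat) (x s : V) : V :=
  \row_(i < n) 'D_(ebasis i) (taylor f p x) s.

Definition model (nrm : V -> R) (f : V -> R) (p : nat) (x : V) (sigma : R)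
  (s : V) : R :=
  taylor f p x s + sigma / (p.+1)`!%:R * nrm s ^+ p.+1.

End Defs.

From HB Require Import structures.
From mathcomp Require Import all_boot all_order all_algebra.
From mathcomp Require Import all_classical all_reals all_analysis.
From mathcomp Require Import ring lra.
Import Order.TTheory GRing.Theory Num.Theory.
Import numFieldNormedType.Exports.
Set Implicit Arguments. Unset Strict Implicit.
Local Open Scope classical_set_scope.
Local Open Scope ring_scope.

(* Proof idea: take for s_k a GLOBAL minimiser of the regularised model     *)
(* m(s) = T(s) + c ||s||^(p+1), T = T_{f,p}(x_k,.), c = sigma/(p+1)!.       *)
(* Then m(s_k) <= m(0) is immediate, and first-order optimality gives the   *)
(* gradient bound even with theta1 = 1 (and for every p, including p = 0).   *)
(*  1. Closure properties of the class C^k, and an explicit multilinear     *)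
(*     form of nabla^l g(y)[s]^l; it shows that T is a polynomial in the    *)
(*     coordinates of s: differentiable, with growth O(|s|^p) at infinity.  *)
(*  2. An arbitrary norm N on R^n is continuous and bounded below by a      *)
(*     multiple of the sup-norm (compactness of the unit sphere).           *)
(*  3. Hence T + c N^(p+1) is coercive and attains a global minimum (extreme *)
(*     value theorem on a closed ball).                                     *)
(*  4. At a minimiser s, one-sided difference quotients and the bound        *)
(*     N(s + h d)^(p+1) - N(s)^(p+1) <= (p+1) (N(s) + h N(d))^p h N(d) give   *)
(*     D_d T(s) >= - c (p+1) N(s)^p N(d) for every direction d.  Since       *)
(*     <grad T(s), d> = D_d T(s), the dual norm of grad T(s) is at most      *)
(*     c (p+1) N(s)^p = sigma/p! N(s)^p.                                     *)

Section SmoothnessClasses.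
Variables (R : realType) (n : nat).
Notation V := 'rV[R]_n.
Implicit Types (g : V -> R).

Lemma derive_partials g (y s : V) : differentiable g y ->
  'D_s g y = \sum_(i < n) s 0 i * 'D_(ebasis R i) g y.
Proof.
move=> dg; rewrite deriveE // {1}(row_sum_delta s) linear_sum.
by apply: eq_bigr => i _; rewrite linearZ /= deriveE.
Qed.

Lemma inner_partials g (y d : V) : differentiable g y ->
  inner (\row_(i < n) 'D_(ebasis R i) g y) d = 'D_d g y.
Proof.
move=> dg; rewrite (derive_partials _ dg) /inner.
by apply: eq_bigr => i _; rewrite mxE mulrC.
Qed.

Lemma Ck_cst k (c : R) : Ck k (fun _ : V => c).
Proof.
elim: k c => [|k IH] c /=; first exact: cst_continuous.
split=> [x|i]; first exact: differentiable_cst.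
have -> : (fun x : V => 'D_(ebasis R i) (fun _ : V => c) x) = fun _ => 0.
  by apply: funext => x; exact: derive_cst.
exact: IH.
Qed.

Lemma Ck_add k g1 g2 : Ck k g1 -> Ck k g2 -> Ck k (fun y => g1 y + g2 y).
Proof.
elim: k g1 g2 => [|k IH] g1 g2 /=.
  by move=> c1 c2 x; apply: (continuousD (c1 x) (c2 x)).
move=> [d1 D1] [d2 D2]; split=> [x|i]; first exact: differentiableD.
have -> : (fun x => 'D_(ebasis R i) (fun y => g1 y + g2 y) x) =
    fun x => 'D_(ebasis R i) g1 x + 'D_(ebasis R i) g2 x.
  by apply: funext => x; rewrite -deriveD //; exact: diff_derivable.
exact: IH.
Qed.

Lemma Ck_scale k (c : R) g : Ck k g -> Ck k (fun y => c * g y).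
Proof.
elim: k g => [|k IH] g /=.
  by move=> cg x; exact: (continuousM (@cst_continuous _ _ c x) (cg x)).
move=> [d D]; split=> [x|i].
  by apply: differentiableM => //; exact: differentiable_cst.
have -> : (fun x => 'D_(ebasis R i) (fun y => c * g y) x) =
    fun x => c * 'D_(ebasis R i) g x.
  by apply: funext => x; rewrite -deriveMl //; exact: diff_derivable.
exact: IH.
Qed.

Lemma Ck_sum k (I : Type) (r : seq I) (F : I -> V -> R) :
  (forall i, Ck k (F i)) -> Ck k (fun y => \sum_(i <- r) F i y).
Proof.
move=> CF; rewrite -fct_sumE; elim/big_ind: _ => //; first exact: Ck_cst.
by move=> g1 g2; exact: Ck_add.
Qed.

Lemma Ck_le l k g : (l <= k)%N -> Ck k g -> Ck l g.
Proof.
have Ck_pred m h : Ck m.+1 h -> Ck m h.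
  elim: m h => [|m IH] h [dh Dh]; first by move=> x; exact: differentiable_continuous.
  by split=> // i; apply: IH; exact: Dh.
move=> /subnK <-; elim: (k - l)%N => [//|m IH] Cg.
by apply: IH; apply: Ck_pred; rewrite -addSn.
Qed.

Lemma Ck_derive k g (s : V) : Ck k.+1 g -> Ck k (fun y => 'D_s g y).
Proof.
move=> [dg Dg].
have -> : (fun y => 'D_s g y) = fun y => \sum_(i < n) s 0 i * 'D_(ebasis R i) g y.
  by apply: funext => y; exact: derive_partials.
by apply: Ck_sum => i; apply: Ck_scale; exact: Dg.
Qed.

End SmoothnessClasses.

Section IteratedDerivatives.
Variables (R : realType) (n : nat).
Notation V := 'rV[R]_n.
Implicit Types (g : V -> R).

Lemma dirnS l (s : V) g : dirn l.+1 s g = dirn l s (fun y => 'D_s g y).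
Proof. by rewrite /dirn iterSr. Qed.

Lemma dirn_linear l (s : V) (G : 'I_n -> V -> R) (c : 'I_n -> R) :
  (forall i, Ck l (G i)) -> forall y,
  dirn l s (fun y => \sum_(i < n) c i * G i y) y =
  \sum_(i < n) c i * dirn l s (G i) y.
Proof.
elim: l G => [//|l IH] G CG y; rewrite dirnS.
have dG i z : derivable (G i) z s.
  by apply: diff_derivable; have [dGi _] := CG i; exact: dGi.
have -> : (fun y => 'D_s (fun y => \sum_(i < n) c i * G i y) y) =
    fun y => \sum_(i < n) c i * 'D_s (G i) y.
  apply: funext => z; rewrite -fct_sumE derive_sum => [|i]; last first.
    by apply: derivableM => //; exact: derivable_cst.
  by apply: eq_bigr => i _; rewrite deriveMl.
rewrite IH => [|i]; last exact: Ck_derive.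
by apply: eq_bigr => i _; rewrite dirnS.
Qed.

Fixpoint tensor_form (l : nat) (g : V -> R) (s y : V) : R :=
  if l is l'.+1 then
    \sum_(i < n) s 0 i * tensor_form l' (fun z => 'D_(ebasis R i) g z) s y
  else g y.

Fixpoint tensor_bound (l : nat) (g : V -> R) (y : V) : R :=
  if l is l'.+1 then \sum_(i < n) tensor_bound l' (fun z => 'D_(ebasis R i) g z) y
  else `|g y|.

Lemma dirn_tensor_form l g : Ck l g -> forall s y, dirn l s g y = tensor_form l g s y.
Proof.
elim: l g => [//|l IH] g Cg s y; rewrite dirnS /=.
have [dg Dg] := Cg.
have -> : (fun y => 'D_s g y) = fun y => \sum_(i < n) s 0 i * 'D_(ebasis R i) g y.
  by apply: funext => z; exact: derive_partials.
rewrite dirn_linear => [|i]; last exact: Dg.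
by apply: eq_bigr => i _; rewrite IH //; exact: Dg.
Qed.

Lemma tensor_form_differentiable l g y s :
  differentiable (fun s => tensor_form l g s y) s.
Proof.
elim: l g => [|l IH] g /=; first exact: differentiable_cst.
rewrite -fct_sumE; apply: differentiable_sum => i.
by apply: differentiableM => //; exact: differentiable_coord.
Qed.

Lemma tensor_form0 l g y : tensor_form l.+1 g 0 y = 0.
Proof. by rewrite /= big1 // => i _; rewrite mxE mul0r. Qed.

Lemma coord_le_norm (s : V) i : `|s 0 i| <= `|s|.
Proof.
rewrite [leRHS]/Num.norm /= mx_normrE; apply/bigmax_geP; right => /=.
by exists (0, i).
Qed.

Lemma tensor_bound_ge0 l g y : 0 <= tensor_bound l g y.
Proof.
elim: l g => [|l IH] g /=; first exact: normr_ge0.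
exact: sumr_ge0.
Qed.

Lemma tensor_form_bound l g y s :
  `|tensor_form l g s y| <= tensor_bound l g y * `|s| ^+ l.
Proof.
elim: l g => [|l IH] g /=; first by rewrite expr0 mulr1.
apply: (le_trans (ler_norm_sum _ _ _)); rewrite mulr_suml; apply: ler_sum => i _.
rewrite normrM exprS mulrCA; apply: ler_pM => //; exact: coord_le_norm.
Qed.

End IteratedDerivatives.

Section TaylorPolynomial.
Variables (R : realType) (n p : nat) (f : 'rV[R]_n -> R) (x : 'rV[R]_n).
Notation V := 'rV[R]_n.
Hypothesis Cf : Ck p f.

Lemma taylor_tensor_form (s : V) :
  taylor f p x s = f x + \sum_(1 <= l < p.+1) (l`!%:R)^-1 * tensor_form l f s x.
Proof.
rewrite /taylor; congr (_ + _); apply: eq_big_nat => l /andP[_ lp].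
by rewrite (dirn_tensor_form (Ck_le (ltnSE lp) Cf)).
Qed.

Lemma taylor_differentiable (s : V) : differentiable (taylor f p x) s.
Proof.
have -> : taylor f p x =
    cst (f x) + \sum_(1 <= l < p.+1) (fun s => (l`!%:R)^-1 * tensor_form l f s x).
  by apply: funext => t; rewrite taylor_tensor_form fct_sumE.
apply: differentiableD; first exact: differentiable_cst.
elim/big_ind: _ => [|g1 g2|l _]; first exact: differentiable_cst.
  exact: differentiableD.
apply: differentiableM; first exact: differentiable_cst.
exact: tensor_form_differentiable.
Qed.

Lemma taylor_at0 : taylor f p x 0 = f x.
Proof.
rewrite taylor_tensor_form big_nat big1 ?addr0 // => -[|l] // _.
by rewrite tensor_form0 mulr0.
Qed.

Lemma taylor_growth : exists2 C : R, 0 <= C &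
  forall s : V, 1 <= `|s| -> `|taylor f p x s - f x| <= C * `|s| ^+ p.
Proof.
exists (\sum_(1 <= l < p.+1) (l`!%:R)^-1 * tensor_bound l f x).
  by apply: sumr_ge0 => l _; rewrite mulr_ge0 ?invr_ge0 ?tensor_bound_ge0.
move=> s s1; rewrite taylor_tensor_form addrC addKr.
apply: le_trans (ler_norm_sum _ _ _) _; rewrite mulr_suml.
apply: ler_sum_nat => l /andP[_ lp].
rewrite normrM ger0_norm ?invr_ge0 // -mulrA ler_wpM2l ?invr_ge0 //.
apply: le_trans (tensor_form_bound _ _ _ _) _.
by rewrite ler_wpM2l ?tensor_bound_ge0 ?ler_weXn2l.
Qed.

End TaylorPolynomial.

Section ArbitraryNorm.
Variables (R : realType) (n : nat) (N : 'rV[R]_n -> R).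
Notation V := 'rV[R]_n.
Hypothesis N_is_norm : is_norm N.

Lemma nrmZ a (s : V) : N (a *: s) = `|a| * N s.
Proof. by case: N_is_norm. Qed.

Lemma nrmD (s t : V) : N (s + t) <= N s + N t.
Proof. by case: N_is_norm. Qed.

Lemma nrm0 : N 0 = 0.
Proof. by rewrite -(scale0r 0) nrmZ normr0 mul0r. Qed.

Lemma nrmN (s : V) : N (- s) = N s.
Proof. by rewrite -scaleN1r nrmZ normrN1 mul1r. Qed.

Lemma nrm_ge0 (s : V) : 0 <= N s.
Proof.
have := nrmD s (- s); rewrite subrr nrm0 nrmN.
by rewrite -mulr2n -mulr_natl pmulr_rge0.
Qed.

Lemma nrm_le_supnorm : exists2 K : R, 0 <= K & forall s : V, N s <= K * `|s|.
Proof.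
exists (\sum_(i < n) N (ebasis R i)); first by apply: sumr_ge0 => i _; exact: nrm_ge0.
move=> s; rewrite {1}(row_sum_delta s) mulr_suml.
elim/big_rec2: _ => [|i y1 y2 _ le12]; first by rewrite nrm0.
apply: le_trans (nrmD _ _) _; rewrite lerD // nrmZ mulrC.
by rewrite ler_wpM2l ?nrm_ge0 ?coord_le_norm.
Qed.

Lemma nrm_continuous : continuous N.
Proof.
have [K K0 NK] := nrm_le_supnorm.
move=> s; apply/(@cvgrPdist_lt _ _ _ (nbhs s) (nbhs_filter s)) => e e0.
apply/(@nbhs_normP _ V s (fun t => `|N s - N t| < e)).
have K1 : 0 < K + 1 by rewrite ltr_wpDl.
exists (e / (K + 1)); first by rewrite /= divr_gt0.
move=> t /=; rewrite ltr_pdivlMr // => st.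
have Nst : `|N s - N t| <= K * `|s - t|.
  have h1 := nrmD (s - t) t; have h2 := nrmD (t - s) s; rewrite !subrK in h1 h2.
  rewrite -opprB nrmN in h2; have := NK (s - t).
  by rewrite ler_norml => h3; apply/andP; split; lra.
apply: le_lt_trans Nst _; apply: le_lt_trans st.
by rewrite mulrC; apply: ler_wpM2l; rewrite ?lerDl.
Qed.

Lemma supnorm_le_nrm : exists2 a : R, 0 < a & forall s : V, a * `|s| <= N s.
Proof.
have normalize (s : V) : s != 0 -> `| `|s|^-1 *: s | = 1.
  by move=> s0; rewrite normrZ ger0_norm ?invr_ge0 // mulVf // normr_eq0.
have [[s1 s1E]|nosphere] := pselect (exists s1 : V, `|s1| = 1); last first.
  exists 1 => // s; have [->|s0] := eqVneq s 0; first by rewrite normr0 mulr0 nrm_ge0.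
  by exfalso; apply: nosphere; exists (`|s|^-1 *: s); exact: normalize.
pose S := [set s : V | `|s| = 1].
have cS : compact S.
  apply: bounded_closed_compact.
    by exists 1; split; [rewrite realE ler01 | move=> M M1 s /= ->; exact: ltW].
  have -> : S = Num.norm @^-1` [set r : R | r = 1] by [].
  by move: (@norm_continuous R V) => /continuous_closedP; apply; exact: closed_eq.
have cN : {within S, continuous N} by apply: continuous_subspaceT; exact: nrm_continuous.
have [c cS1 cmin] := compact_EVT_min (ex_intro _ s1 s1E) cS cN.
have Nc : 0 < N c.
  rewrite lt_def nrm_ge0 andbT; apply/eqP => Nc0.
  have [/(_ c Nc0) c0 _ _] := N_is_norm.
  by move: cS1; rewrite inE c0 /S /= normr0 => /eqP; rewrite eq_sym oner_eq0.
exists (N c) => // s; have [->|s0] := eqVneq s 0; first by rewrite normr0 mulr0 nrm_ge0.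
have := cmin (`|s|^-1 *: s); rewrite inE => /(_ (normalize s s0)).
rewrite nrmZ ger0_norm ?invr_ge0 // => h.
by rewrite -ler_pdivlMr ?normr_gt0 // mulrC.
Qed.

End ArbitraryNorm.

Lemma subrXX_le (R : realDomainType) (x y : R) k : 0 <= y -> y <= x ->
  x ^+ k.+1 - y ^+ k.+1 <= (x - y) * (k.+1%:R * x ^+ k).
Proof.
move=> y0 yx; have x0 : 0 <= x := le_trans y0 yx.
rewrite subrXX ler_wpM2l ?subr_ge0 //.
have -> : k.+1%:R * x ^+ k = \sum_(i < k.+1) x ^+ k.
  by rewrite sumr_const card_ord mulr_natl.
apply: ler_sum => i _; have ik : (i <= k)%N := leq_ord i.
have -> : x ^+ k = x ^+ (k - i) * x ^+ i by rewrite -exprD subnK.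
by rewrite ler_wpM2l ?exprn_ge0 // lerXn2r ?nnegrE.
Qed.

Section GlobalMinimum.
Variables (R : realType) (n : nat).
Notation V := 'rV[R]_n.

(* A continuous function on R^n exceeding its value at 0 outside some ball *)
(* attains a global minimum (extreme value theorem on that closed ball).   *)
Lemma coercive_global_min (g : V -> R) (rho : R) : continuous g ->
  (forall s, rho < `|s| -> g 0 < g s) -> exists s, forall t, g s <= g t.
Proof.
move=> cg grow; pose B := [set s : V | `|s| <= `|rho|].
have B0 : B 0 by rewrite /B /= normr0.
have cB : compact B.
  apply: bounded_closed_compact.
    exists `|rho|; split=> [|M rhoM s /= sB]; first exact: normr_real.
    exact: le_trans sB (ltW rhoM).
  have -> : B = Num.norm @^-1` [set r : R | r <= `|rho|] by [].
  by move: (@norm_continuous R V) => /continuous_closedP; apply; exact: closed_le.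
have [s sB smin] := compact_EVT_min (ex_intro _ 0 B0) cB (continuous_subspaceT cg).
exists s => t; have [tB|tB] := lerP `|t| `|rho|; first by apply: smin; rewrite inE.
apply: le_trans (ltW (grow t (le_lt_trans (ler_norm rho) tB))).
by apply: smin; rewrite inE.
Qed.

End GlobalMinimum.

Section RegularizedModel.
Variables (R : realType) (n : nat) (N : 'rV[R]_n -> R).
Notation V := 'rV[R]_n.
Hypothesis N_is_norm : is_norm N.

Definition regularized (T : V -> R) (c : R) (p : nat) (s : V) : R :=
  T s + c * N s ^+ p.+1.

Lemma regularized_continuous (T : V -> R) (c : R) p :
  continuous T -> continuous (regularized T c p).
Proof.
move=> cT s; rewrite /regularized; apply: (continuousD (cT s)).
apply: continuousM; first exact: cst_continuous.
have cN : {for s, continuous N} by exact: nrm_continuous.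
have cX : {for N s, continuous (fun r : R => r ^+ p.+1)} by exact: exprn_continuous.
exact: continuous_comp cN cX.
Qed.

Lemma regularized_coercive (T : V -> R) (c : R) p (C : R) : 0 < c -> 0 <= C ->
  (forall s, 1 <= `|s| -> T 0 - C * `|s| ^+ p <= T s) ->
  exists rho : R, forall s, rho < `|s| -> regularized T c p 0 < regularized T c p s.
Proof.
move=> c0 C0 Tgrow; have [a a0 aN] := supnorm_le_nrm N_is_norm.
pose K := c * a ^+ p.+1; have K0 : 0 < K by rewrite mulr_gt0 ?exprn_gt0.
exists (1 + C / K) => s rho_s.
have s1 : 1 <= `|s| by apply: le_trans (ltW rho_s); rewrite lerDl divr_ge0 // ltW.
have sp : 0 < `|s| ^+ p by rewrite exprn_gt0 // (lt_le_trans ltr01 s1).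
have CK : C < K * `|s|.
  by rewrite -ltr_pdivrMl // mulrC; apply: le_lt_trans rho_s; rewrite lerDr.
have Cs : C * `|s| ^+ p < c * (a * `|s|) ^+ p.+1.
  have -> : c * (a * `|s|) ^+ p.+1 = K * `|s| * `|s| ^+ p.
    by rewrite /K exprMn [`|s| ^+ p.+1]exprS; ring.
  by rewrite ltr_pM2r.
have aNs : c * (a * `|s|) ^+ p.+1 <= c * N s ^+ p.+1.
  apply: ler_wpM2l; first exact: ltW.
  apply: lerXn2r; last exact: aN.
    by rewrite nnegrE mulr_ge0 // ltW.
  by rewrite nnegrE (nrm_ge0 N_is_norm).
have := Tgrow s s1; rewrite /regularized (nrm0 N_is_norm) expr0n mulr0 addr0; lra.
Qed.

(* Difference quotients at a global minimiser of the regularisation are   *)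
(* bounded below, since the regulariser grows by at most                  *)
(* c (p+1) (N(s) + h N(d))^p h N(d) along s + h d.                         *)
Lemma regularized_min_quotient (T : V -> R) (c : R) p (s d : V) (h : R) :
  0 <= c -> 0 < h ->
  (forall t, regularized T c p s <= regularized T c p t) ->
  - (c * p.+1%:R * N d) * (N s + h * N d) ^+ p <= h^-1 * (T (h *: d + s) - T s).
Proof.
move=> c0 h0 smin; have := smin (h *: d + s); rewrite /regularized => hmin.
have Nd0 := nrm_ge0 N_is_norm d; have Ns0 := nrm_ge0 N_is_norm s.
have shift_le : N (h *: d + s) <= N s + h * N d.
  by apply: le_trans (nrmD N_is_norm _ _) _; rewrite nrmZ // gtr0_norm // addrC.
have pow_le : c * N (h *: d + s) ^+ p.+1 <= c * (N s + h * N d) ^+ p.+1.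
  apply: ler_wpM2l => //; apply: lerXn2r; last exact: shift_le.
    by rewrite nnegrE (nrm_ge0 N_is_norm).
  by rewrite nnegrE addr_ge0 // mulr_ge0 // ltW.
have Ns_le : N s <= N s + h * N d by rewrite lerDl mulr_ge0 // ltW.
have incr_le := subrXX_le p Ns0 Ns_le.
rewrite (_ : N s + h * N d - N s = h * N d) in incr_le; last by ring.
have := ler_wpM2l c0 incr_le => {}incr_le.
rewrite -(ler_pM2l h0) [X in _ <= X]mulrA mulfV ?gt_eqF // mul1r; lra.
Qed.

Lemma regularized_min_derivative (T : V -> R) (c : R) p (s : V) :
  0 <= c -> differentiable T s ->
  (forall t, regularized T c p s <= regularized T c p t) ->
  forall d, - (c * p.+1%:R * N d) * N s ^+ p <= 'D_d T s.
Proof.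
move=> c0 dT smin d.
pose quot h : R := h^-1 *: ((T \o shift s) (h *: d) - T s).
have quot_lim : quot @ 0^'+ --> 'D_d T s.
  have quot_lim0 : quot @ 0^' --> 'D_d T s by exact: diff_derivable.
  apply: cvg_trans quot_lim0; apply: cvg_app.
  by apply: within_subset => h /= h0; exact: lt0r_neq0.
pose bound h := - (c * p.+1%:R * N d) * (N s + h * N d) ^+ p.
have bound_lim : bound @ 0^'+ --> bound 0.
  have cA : {for 0, continuous (fun h : R => N s + h * N d)}.
    apply: continuousD; first exact: cst_continuous.
    by apply: continuousM; [exact: cvg_id | exact: cst_continuous].
  apply: cvg_at_right_filter.
  exact: (continuousM (@cst_continuous _ _ (- (c * p.+1%:R * N d)) 0)
    (continuous_comp cA (@exprn_continuous R p _))).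
have := ler_cvg_to bound_lim quot_lim; rewrite /bound mul0r addr0; apply.
near=> h; apply: regularized_min_quotient c0 _ smin.
by near: h; exact: nbhs_right_gt.
Unshelve. all: end_near.
Qed.

Lemma dualnorm_le (g : V) (K : R) : 0 <= K ->
  (forall d, - (K * N d) <= inner g d) -> dualnorm N g <= K.
Proof.
move=> K0 lower; have innerN d : inner g (- d) = - inner g d.
  by rewrite /inner -sumrN; apply: eq_bigr => i _; rewrite !mxE mulrN.
rewrite /dualnorm; set E := [set `|inner g s| | s in [set s | N s = 1]].
have [E0|E0] := pselect (E !=set0); last first.
  suff -> : E = set0 by rewrite sup0.
  by apply/seteqP; split=> // y Ey; exfalso; apply: E0; exists y.
apply: ge_sup => // _ [s /= s1 <-]; have := lower s; have := lower (- s).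
by rewrite innerN nrmN // s1 ler_norml => l1 l2; apply/andP; split; lra.
Qed.

End RegularizedModel.

Lemma mul_invfactS (R : numFieldType) (a : R) p :
  a / (p.+1)`!%:R * p.+1%:R = a / p`!%:R.
Proof.
rewrite factS natrM; field.
by rewrite pnatr_eq0 -lt0n fact_gt0 /= addrC natr1 pnatr_eq0.
Qed.

Theorem corollary2p3 (R : realType) (n p : nat) (nrm : 'rV[R]_n -> R)
  (f : 'rV[R]_n -> R) (xk : 'rV[R]_n) (sigmak theta1 : R) :
  is_norm nrm -> (1 <= p)%N -> Ck p f -> 0 < sigmak -> 1 <= theta1 ->
  exists sk : 'rV[R]_n,
    model nrm f p xk sigmak sk <= model nrm f p xk sigmak 0 /\
    dualnorm nrm (gradT f p xk sk) <= theta1 * (sigmak / p`!%:R) * nrm sk ^+ p.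
Proof.
move=> nrm_is_norm _ Cf sigma0 theta1_ge1.
pose c := sigmak / (p.+1)`!%:R; have c0 : 0 < c by rewrite divr_gt0 ?ltr0n ?fact_gt0.
pose T := taylor f p xk.
have dT : forall s, differentiable T s := taylor_differentiable xk Cf.
have -> : model nrm f p xk sigmak = regularized nrm T c p by [].
have [C C0 Tgrow] := taylor_growth xk Cf.
have [rho coercive] : exists rho : R, forall s, rho < `|s| ->
    regularized nrm T c p 0 < regularized nrm T c p s.
  apply: (regularized_coercive nrm_is_norm c0 C0) => s /Tgrow.
  by rewrite /T taylor_at0 // ler_norml => /andP[+ _]; lra.
have cont : continuous (regularized nrm T c p).
  by apply: regularized_continuous => // s; exact: differentiable_continuous.
have [sk skmin] := coercive_global_min cont coercive.
exists sk; split; first exact: skmin.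
pose K := sigmak / p`!%:R * nrm sk ^+ p.
have K0 : 0 <= K by rewrite mulr_ge0 ?exprn_ge0 ?(nrm_ge0 nrm_is_norm) ?divr_ge0 ?ltW.
apply: (@le_trans _ _ K); last by rewrite -mulrA ler_peMl.
apply: dualnorm_le => // d; rewrite /gradT inner_partials //.
have := regularized_min_derivative nrm_is_norm (ltW c0) (dT sk) skmin d.
by rewrite mul_invfactS mulNr mulrAC.
Qed.
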